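(* Let $\mathcal S$ be an aperiodic primitive qubit spin substitution with spin matrix $W$, and let $\chi\in\widehat G$. Suppose $\mathcal S$ is $\chi$-unitary. Then $\mathcal S^M$ is also $\chi$-unitary in the sense that for every $M\ge1$, $$\sum_{\vec d\in\mathcal D}\chi\big(\pi_G(\mathcal S^M_{\vec i}(\mathsf d))\big)\,\overline{\chi\big(\pi_G(\mathcal S^M_{\vec j}(\mathsf d))\big)}=0$$ for all $\vec i,\vec j\in\mathcal D^{(M)}$ whose $(M-1)$st digits $i^{(M-1)}\neq j^{(M-1)}$ in the $(Q,\mathcal D)$-adic expansion are distinct (here $\mathsf d$ is the spin-free letter for $\vec d$).
   Context: $Q$ is an expansive endomorphism of $\mathbb Z^m$ and $\mathcal D$ a complete set of coset representatives of $\mathbb Z^m/Q\mathbb Z^m$; $\mathcal D^{(0)}=\{0\}$, $\mathcal D^{(n)}=Q\mathcal D^{(n-1)}+\mathcal D$, each $\vec i\in\mathcal D^{(n)}$ expanding uniquely as $\sum_{\ell=0}^{n-1}Q^\ell i^{(\ell)}$, $i^{(\ell)}\in\mathcal D$. $G$ is a finite abelian group, $W:\mathcal D\times\mathcal D\to G$, alphabet $G\times\mathcal D$ with letters $g\mathsf d$ (spin-free: $g=e$), spin substitution $\mathcal S(g\mathsf d,\vec d')=(gW(\vec d,\vec d'))\mathsf d'$, $M$-supertiles $\mathcal S^M_{\vec i}(\mathsf a)=\mathcal S_{i^{(0)}}(\cdots\mathcal S_{i^{(M-1)}}(\mathsf a)\cdots)$ where $\mathcal S_{\vec d}(\mathsf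 a)=\mathcal S(\mathsf a,\vec d)$; $\pi_G(g\mathsf d)=g$. Primitive: the substitution matrix $M_{\mathsf a\mathsf b}=\#\{\vec d:\mathcal S(\mathsf b,\vec d)=\mathsf a\}$ has a positive power; aperiodic: no configuration in the associated subshift $\Sigma$ (configurations in $(G\times\mathcal D)^{\mathbb Z^m}$ whose rectangular subpatterns occur in supertiles) has a nonzero period. $\chi(W)$ is the matrix $(\chi(W(\vec d,\vec d')))_{\vec d,\vec d'}$; $\mathcal S$ is $\chi$-unitary if $\frac{1}{\sqrt{|\mathcal D|}}\chi(W)$ is unitary. *)

From HB Require Import structures.
From mathcomp Require Import all_boot all_order all_algebra all_fingroup all_field.
Set Implicit Arguments. Unset Strict Implicit. Unset Printing Implicit Defensive.
Import Order.TTheory GRing.Theory Num.Theory.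
Local Open Scope ring_scope.

Definition expansive (m : nat) (Q : 'M[int]_m) : Prop :=
  forall lam : algC, root (char_poly (map_mx intr Q)) lam -> 1 < `|lam|.

(* The digit set D = {dig i | i : 'I_k} is a complete set of coset
   representatives of Z^m / Q Z^m: every z is congruent mod Q Z^m to exactly
   one digit (this also forces the dig i to be pairwise distinct). *)
Definition complete_coset_reps (m k : nat) (Q : 'M[int]_m)
    (dig : 'I_k -> 'cV[int]_m) : Prop :=
  forall z : 'cV[int]_m, exists! i : 'I_k, exists y : 'cV[int]_m, z - dig i = Q *m y.

Definition letter (gT : finGroupType) (k : nat) := (gT * 'I_k)%type.

Definition spin_sub (gT : finGroupType) (k : nat) (W : 'I_k -> 'I_k -> gT)
    (a : letter gT k) (d' : 'I_k) : letter gT k :=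
  ((a.1 * W a.2 d')%g, d').

(* M-supertile S^M_i(a) = S_{i^(0)}(... S_{i^(M-1)}(a) ...), where the digit
   tuple t = (i^(0), ..., i^(M-1)) is the (Q,D)-adic expansion of i. *)
Definition supertile (gT : finGroupType) (k : nat) (W : 'I_k -> 'I_k -> gT)
    (M : nat) (t : M.-tuple 'I_k) (a : letter gT k) : letter gT k :=
  foldr (fun d acc => spin_sub W acc d) a t.

Definition digit_pos (m k : nat) (Q : 'M[int]_m) (dig : 'I_k -> 'cV[int]_m)
    (M : nat) (t : M.-tuple 'I_k) : 'cV[int]_m :=
  \sum_(l < M) (Q ^+ l) *m dig (tnth t l).

Definition spin_free (gT : finGroupType) (k : nat) (d : 'I_k) : letter gT k :=
  (1%g, d).

Definition subst_matrix (gT : finGroupType) (k : nat) (W : 'I_k -> 'I_k -> gT)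
    : 'M[int]_#|{: letter gT k}| :=
  \matrix_(i, j) (#|[set d : 'I_k | spin_sub W (enum_val j) d == enum_val i]|%:Z).

Definition primitive_sub (gT : finGroupType) (k : nat) (W : 'I_k -> 'I_k -> gT)
    : Prop :=
  exists n : nat, (0 < n)%N /\ forall i j, 0 < (subst_matrix W ^+ n) i j.

Definition config (gT : finGroupType) (k m : nat) :=
  'cV[int]_m -> letter gT k.

Definition in_box (m : nat) (lo hi z : 'cV[int]_m) : Prop :=
  forall r : 'I_m, lo r 0 <= z r 0 <= hi r 0.

Definition box_occurs (m k : nat) (Q : 'M[int]_m) (dig : 'I_k -> 'cV[int]_m)
    (gT : finGroupType) (W : 'I_k -> 'I_k -> gT) (x : config gT k m)
    (lo hi : 'cV[int]_m) : Prop :=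
  exists (M : nat) (t0 : 'cV[int]_m) (a : letter gT k),
    forall z, in_box lo hi z ->
      exists tp : M.-tuple 'I_k,
        digit_pos Q dig tp = z + t0 /\ supertile W tp a = x z.

Definition in_subshift (m k : nat) (Q : 'M[int]_m) (dig : 'I_k -> 'cV[int]_m)
    (gT : finGroupType) (W : 'I_k -> 'I_k -> gT) (x : config gT k m) : Prop :=
  forall lo hi : 'cV[int]_m, box_occurs Q dig W x lo hi.

Definition aperiodic (m k : nat) (Q : 'M[int]_m) (dig : 'I_k -> 'cV[int]_m)
    (gT : finGroupType) (W : 'I_k -> 'I_k -> gT) : Prop :=
  forall x : config gT k m, in_subshift Q dig W x ->
    forall p : 'cV[int]_m, (forall z, x (z + p) = x z) -> p = 0.

Definition is_group_character (gT : finGroupType) (chi : gT -> algC) : Prop :=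
  chi 1%g = 1 /\ forall x y : gT, chi (x * y)%g = chi x * chi y.

Definition chi_W (gT : finGroupType) (k : nat) (W : 'I_k -> 'I_k -> gT)
    (chi : gT -> algC) : 'M[algC]_k :=
  \matrix_(i, j) chi (W i j).

Definition chi_unitary (gT : finGroupType) (k : nat) (W : 'I_k -> 'I_k -> gT)
    (chi : gT -> algC) : Prop :=
  let U := (sqrtC (k%:R))^-1 *: chi_W W chi in
  U *m (map_mx (fun z : algC => z^*) U)^T = 1%:M.

From HB Require Import structures.
From mathcomp Require Import all_boot all_order all_algebra all_fingroup all_field.
Import Order.TTheory GRing.Theory Num.Theory.
Local Open Scope ring_scope.

(* The innermost substitution of an M-supertile is the one of the last
   digit x, and on the spin-free letter d it produces (W(d,x)) x; every later
   substitution only multiplies the spin on the right by factors that depend on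
   x and the remaining digits, not on d.  So the spin of S^M_i(d) is
   W(d, i^(M-1)) times a constant, chi turns the sum over d into a constant
   times sum_d chi(W(d,x)) conj chi(W(d,y)), and this vanishes for x != y
   because the columns of a unitary matrix are orthogonal. *)

Lemma scaled_unitary_col_orthogonal {n : nat} {c : algC} {A : 'M[algC]_n} :
  c != 0 -> (c *: A) *m (map_mx (fun z : algC => z^*) (c *: A))^T = 1%:M ->
  forall a b : 'I_n, a != b -> \sum_i A i a * (A i b)^* = 0.
Proof.
move=> c_neq0 /mulmx1C unitaryA a b neq_ab.
have /eqP := congr1 (fun B : 'M[algC]_n => B b a) unitaryA.
rewrite !mxE [b == a]eq_sym (negbTE neq_ab).
under eq_bigr => i _ do rewrite !mxE rmorphM /= mulrACA [(A i b)^* * _]mulrC.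
by rewrite -mulr_sumr mulf_eq0 mulf_eq0 conjC_eq0 (negbTE c_neq0) => /eqP.
Qed.

Lemma chi_unitary_col_orthogonal {gT : finGroupType} {k : nat}
    {W : 'I_k -> 'I_k -> gT} {chi : gT -> algC} :
  chi_unitary W chi -> forall a b : 'I_k, a != b ->
  \sum_d chi (W d a) * (chi (W d b))^* = 0.
Proof.
move=> unitaryW a b neq_ab.
have k_gt0 : (0 < k)%N by apply: leq_ltn_trans (ltn_ord a).
have c_neq0 : (sqrtC k%:R)^-1 != 0 :> algC.
  by rewrite invr_eq0 sqrtC_eq0 pnatr_eq0 -lt0n.
have := scaled_unitary_col_orthogonal c_neq0 unitaryW a b neq_ab.
by under eq_bigr => d _ do rewrite !mxE.
Qed.

Section SpinWords.

Context {gT : finGroupType} {k : nat} (W : 'I_k -> 'I_k -> gT).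

Definition spin_word (s : seq 'I_k) (a : letter gT k) : letter gT k :=
  foldr (fun d acc => spin_sub W acc d) a s.

Lemma spin_word_spin (s : seq 'I_k) (g : gT) (e : 'I_k) :
  spin_word s (g, e) =
  ((g * (spin_word s (1%g, e)).1)%g, (spin_word s (1%g, e)).2).
Proof.
elim: s => [|d s IHs] /=; first by rewrite mulg1.
by rewrite IHs /spin_sub /= mulgA.
Qed.

Lemma spin_word_rcons (s : seq 'I_k) (x : 'I_k) (a : letter gT k) :
  spin_word (rcons s x) a = spin_word s (spin_sub W a x).
Proof. exact: foldr_rcons. Qed.

Lemma spin_word_rcons_spin_free (s : seq 'I_k) (x d : 'I_k) :
  (spin_word (rcons s x) (spin_free gT d)).1 =
  (W d x * (spin_word s (1%g, x)).1)%g.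
Proof. by rewrite spin_word_rcons /spin_sub /= mul1g spin_word_spin. Qed.

Context {chi : gT -> algC}.
Hypothesis chiM : {morph chi : g h / (g * h)%g >-> g * h}.

Lemma spin_word_last_digit_orthogonal (s1 s2 : seq 'I_k) (x1 x2 : 'I_k) :
  chi_unitary W chi -> x1 != x2 ->
  \sum_d chi (spin_word (rcons s1 x1) (spin_free gT d)).1
         * (chi (spin_word (rcons s2 x2) (spin_free gT d)).1)^* = 0.
Proof.
move=> unitaryW neq_x.
under eq_bigr => d _ do
  rewrite !spin_word_rcons_spin_free !chiM rmorphM /= mulrACA mulrC.
by rewrite -mulr_sumr (chi_unitary_col_orthogonal unitaryW _ _ neq_x) mulr0.
Qed.

End SpinWords.

Lemma tuple_split_last {T : Type} {M : nat} (t : M.-tuple T) :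
  (0 < M)%N -> exists s x, tval t = rcons s x /\ size s = M.-1.
Proof.
case: t => s; case/lastP: s => [|s x] /eqP size_t M_gt0 /=.
  by rewrite -size_t in M_gt0.
by exists s, x; rewrite -size_t size_rcons.
Qed.

Theorem proposition3p17
  (m k : nat) (Q : 'M[int]_m) (dig : 'I_k -> 'cV[int]_m)
  (gT : finGroupType) (W : 'I_k -> 'I_k -> gT) (chi : gT -> algC) :
  expansive Q ->
  complete_coset_reps Q dig ->
  abelian [set: gT] ->
  #|gT| = 2%N ->                              (* qubit: spin group of order 2 *)
  primitive_sub W ->
  aperiodic Q dig W ->
  is_group_character chi ->
  chi_unitary W chi ->
  forall (M : nat), (1 <= M)%N ->
  forall ti tj : M.-tuple 'I_k,
    nth 0%N (map val ti) M.-1 != nth 0%N (map val tj) M.-1 ->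
    \sum_(d : 'I_k)
       chi (supertile W ti (spin_free gT d)).1
       * (chi (supertile W tj (spin_free gT d)).1)^* = 0.
Proof.
move=> _ _ _ _ _ _ [_ chiM] unitaryW M M_gt0 ti tj.
rewrite /supertile.
have [si [xi [-> size_si]]] := tuple_split_last ti M_gt0.
have [sj [xj [-> size_sj]]] := tuple_split_last tj M_gt0.
rewrite !map_rcons -{1}size_si -size_sj -(size_map val si) -(size_map val sj).
rewrite !nth_rcons !ltnn !eqxx => neq_x.
exact: (spin_word_last_digit_orthogonal W chiM _ _ _ _ unitaryW neq_x).
Qed.
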